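(* Let $X$ be a Baire space and $(Z,d)$ a metric space. Let $f_n:X\to Z$ ($n\in\mathbb N$) be quasicontinuous mappings and $f:X\to Z$ a mapping. Suppose that for each $x\in X$, $f(x)$ is a cluster point of the sequence $(f_n(x))_{n\in\mathbb N}$, and that for each $x$ in a given dense Baire subspace $A$ of $X$, $(f_n(x))_{n\in\mathbb N}$ converges to $f(x)$. Then for each $x\in A$ the following are equivalent: (1) the sequence $(f_n)_{n\in\mathbb N}$ is equi-quasicontinuous at $x$; (2) $f$ is quasicontinuous at $x$.
   Context: A mapping $g:X\to Z$ is quasicontinuous at $a$ if for each neighborhood $U$ of $a$ and each neighborhood $W$ of $g(a)$ there is an open $O$ with $\emptyset\ne O\subset U$ and $g(O)\subset W$; quasicontinuous means at every point. A sequence $(f_n)$ of mappings $X\to Z$ is equi-quasicontinuous at $x\in X$ if for each neighborhood $U$ of $x$ and each $\varepsilon>0$ there are an open set $O\subset X$ with $\emptyset\ne O\subset U$ and $n_0\in\mathbb N$ such that $d(f_n(x),f_n(y))<\varepsilon$ for every $n\ge n_0$ and every $y\in O$. *)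

From Stdlib Require Import Reals.
Open Scope R_scope.

(* A topological space: a type with a family of open sets closed under
   finite intersections and arbitrary unions, containing the whole space
   (the empty set is the union of the empty family). *)
Record TopSpace := {
  carrier :> Type;
  is_open : (carrier -> Prop) -> Prop;
  open_full : is_open (fun _ => True);
  open_inter : forall U V, is_open U -> is_open V -> is_open (fun x => U x /\ V x);
  open_union : forall (I : Type) (F : I -> carrier -> Prop),
      (forall i, is_open (F i)) -> is_open (fun x => exists i, F i x)
}.

Record MetricSpace := {
  mcarrier :> Type;
  dist : mcarrier -> mcarrier -> R;
  dist_eq0 : forall x y, dist x y = 0 <-> x = y;
  dist_sym : forall x y, dist x y = dist y x;
  dist_tri : forall x y z, dist x z <= dist x y + dist y z
}.

Definition m_open {Z : MetricSpace} (W : Z -> Prop) : Prop :=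
  forall z, W z -> exists eps, 0 < eps /\ forall w, dist Z z w < eps -> W w.

Definition nbhd {X : TopSpace} (x : X) (U : X -> Prop) : Prop :=
  exists O, is_open X O /\ O x /\ forall y, O y -> U y.

Definition m_nbhd {Z : MetricSpace} (z : Z) (W : Z -> Prop) : Prop :=
  exists O, m_open O /\ O z /\ forall w, O w -> W w.

Definition quasicontinuous_at {X : TopSpace} {Z : MetricSpace}
  (g : X -> Z) (a : X) : Prop :=
  forall U W, nbhd a U -> m_nbhd (g a) W ->
    exists O, is_open X O /\ (exists y, O y) /\ (forall y, O y -> U y) /\
              (forall y, O y -> W (g y)).

Definition quasicontinuous {X : TopSpace} {Z : MetricSpace} (g : X -> Z) : Prop :=
  forall a, quasicontinuous_at g a.

Definition equi_quasicontinuous_at {X : TopSpace} {Z : MetricSpace}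
  (fs : nat -> X -> Z) (x : X) : Prop :=
  forall U eps, nbhd x U -> 0 < eps ->
    exists O n0, is_open X O /\ (exists y, O y) /\ (forall y, O y -> U y) /\
      forall n y, (n >= n0)%nat -> O y -> dist Z (fs n x) (fs n y) < eps.

Definition cluster_point {Z : MetricSpace} (u : nat -> Z) (z : Z) : Prop :=
  forall W N, m_nbhd z W -> exists n, (n >= N)%nat /\ W (u n).

Definition converges_to {Z : MetricSpace} (u : nat -> Z) (z : Z) : Prop :=
  forall W, m_nbhd z W -> exists N, forall n, (n >= N)%nat -> W (u n).

Definition dense {X : TopSpace} (A : X -> Prop) : Prop :=
  forall V, is_open X V -> (exists y, V y) -> exists y, V y /\ A y.

(* The subset A, with the subspace topology, is a Baire space: every
   countable family of relatively open, relatively dense subsets of A has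
   relatively dense intersection (in A). *)
Definition rel_open {X : TopSpace} (A G : X -> Prop) : Prop :=
  (forall x, G x -> A x) /\
  exists U, is_open X U /\ forall x, A x -> (G x <-> U x).

Definition rel_dense {X : TopSpace} (A G : X -> Prop) : Prop :=
  forall V, is_open X V -> (exists y, A y /\ V y) -> exists y, A y /\ V y /\ G y.

Definition baire_subspace {X : TopSpace} (A : X -> Prop) : Prop :=
  forall G : nat -> X -> Prop,
    (forall n, rel_open A (G n)) -> (forall n, rel_dense A (G n)) ->
    rel_dense A (fun x => forall n, G n x).

Definition baire_space (X : TopSpace) : Prop :=
  baire_subspace (fun _ : X => True).

(* For (1) => (2): a point y of a small open set has f y near f_n y for infinitely many n,
   f_n y is near f_n x for large n by equi-quasicontinuity, and f_n x is near f x.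
   For (2) => (1): quasicontinuity of f gives an open set O on which f stays near f x;
   the points of the dense Baire subspace A in O are covered by the countably many sets
   H k = { z | f_n z is near f x for all n >= k }, so some H k is dense in a nonempty open
   V inside O.  Quasicontinuity of f_n then pushes the estimate from H k to all of V. *)
From Pilot Require Import Defs.
From Stdlib Require Import Reals Lra Lia Classical.
Open Scope R_scope.

Section MetricBalls.

Variable Z : MetricSpace.

Lemma m_nbhd_ball (z : Z) (e : R) :
  0 < e -> m_nbhd z (fun w => Defs.dist Z z w < e).
Proof.
  intros He. exists (fun w => Defs.dist Z z w < e). split; [|split].
  - intros w Hw. exists (e - Defs.dist Z z w). split; [lra|].
    intros w' Hw'. pose proof (Defs.dist_tri Z z w w'). lra.
  - assert (Defs.dist Z z z = 0) by (apply Defs.dist_eq0; reflexivity). lra.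
  - auto.
Qed.

Lemma m_nbhd_contains_ball (z : Z) (W : Z -> Prop) :
  m_nbhd z W -> exists r, 0 < r /\ forall w, Defs.dist Z z w < r -> W w.
Proof.
  intros [O [HO [Oz HW]]]. destruct (HO z Oz) as [r [Hr H]].
  exists r. split; auto.
Qed.

Lemma dist_tri3 (a b c d : Z) :
  Defs.dist Z a d <= Defs.dist Z a b + Defs.dist Z b c + Defs.dist Z c d.
Proof.
  pose proof (Defs.dist_tri Z a b d). pose proof (Defs.dist_tri Z b c d). lra.
Qed.

Lemma converges_to_ball (u : nat -> Z) (z : Z) (e : R) :
  converges_to u z -> 0 < e -> exists N, forall n, (n >= N)%nat -> Defs.dist Z z (u n) < e.
Proof. intros Hu He. exact (Hu _ (m_nbhd_ball z e He)). Qed.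

Lemma cluster_point_ball (u : nat -> Z) (z : Z) (e : R) (N : nat) :
  cluster_point u z -> 0 < e -> exists n, (n >= N)%nat /\ Defs.dist Z z (u n) < e.
Proof. intros Hu He. exact (Hu _ N (m_nbhd_ball z e He)). Qed.

End MetricBalls.

Section Topology.

Variable X : TopSpace.

Definition dense_within (V P : X -> Prop) : Prop :=
  forall V', is_open X V' -> (exists y, V' y) -> (forall z, V' z -> V z) ->
    exists z, V' z /\ P z.

Lemma not_dense_within (V P : X -> Prop) :
  ~ dense_within V P ->
  exists V', is_open X V' /\ (exists y, V' y) /\ (forall z, V' z -> V z) /\
    forall z, V' z -> ~ P z.
Proof.
  intros Hnd. apply NNPP. intros Hno. apply Hnd.
  intros V' HV' Hne Hsub. apply NNPP. intros Hmiss. apply Hno.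
  exists V'. repeat split; auto.
  intros z V'z Pz. apply Hmiss. exists z. auto.
Qed.

(* The union of all open sets whose trace on O misses P, written as an indexed union so
   that [open_union] applies directly. *)
Definition avoiding_in (O P : X -> Prop) : X -> Prop :=
  fun y => exists V : {V : X -> Prop | is_open X V /\ forall z, V z -> O z -> ~ P z},
    proj1_sig V y.

Lemma open_avoiding_in (O P : X -> Prop) : is_open X (avoiding_in O P).
Proof.
  apply (open_union X _ (fun V y => proj1_sig V y)).
  intros V. exact (proj1 (proj2_sig V)).
Qed.

Lemma rel_open_avoiding_in (A O P : X -> Prop) :
  rel_open A (fun y => A y /\ avoiding_in O P y).
Proof.
  split.
  - intros y [Ay _]. exact Ay.
  - exists (avoiding_in O P). split; [apply open_avoiding_in|]. tauto.
Qed.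

Lemma rel_dense_avoiding_in (A O P : X -> Prop) :
  dense A -> is_open X O ->
  (forall V, is_open X V -> (exists y, V y) -> (forall z, V z -> O z) -> ~ dense_within V P) ->
  rel_dense A (fun y => A y /\ avoiding_in O P y).
Proof.
  intros HA HO Hnowhere V HV [y0 [Ay0 Vy0]].
  destruct (classic (exists z, V z /\ O z)) as [HVO | HVO].
  - assert (HVO_open : is_open X (fun z => V z /\ O z)) by (apply open_inter; auto).
    destruct (not_dense_within _ _ (Hnowhere _ HVO_open HVO (fun z Hz => proj2 Hz)))
      as [V' [HV' [Hne [Hsub Hmiss]]]].
    destruct (HA V' HV' Hne) as [y [V'y Ay]].
    exists y. repeat split; try apply Hsub; auto.
    exists (exist _ V' (conj HV' (fun z Hz _ => Hmiss z Hz))). exact V'y.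
  - exists y0. repeat split; auto.
    unshelve eexists (exist _ V (conj HV _)); [|exact Vy0].
    intros z Vz Oz _. apply HVO. exists z. auto.
Qed.

Lemma baire_somewhere_dense (A O : X -> Prop) (H : nat -> X -> Prop) :
  dense A -> baire_subspace A -> is_open X O -> (exists y, O y) ->
  (forall y, A y -> O y -> exists k, H k y) ->
  exists k V, is_open X V /\ (exists y, V y) /\ (forall z, V z -> O z) /\
    dense_within V (H k).
Proof.
  intros HA HbA HO [y0 Oy0] Hcover. apply NNPP. intros Hnowhere.
  set (G := fun k y => A y /\ avoiding_in O (H k) y).
  assert (HG : rel_dense A (fun y => forall k, G k y)).
  { apply HbA; intros k.
    - apply rel_open_avoiding_in.
    - apply rel_dense_avoiding_in; auto.
      intros V HV Hne Hsub Hdense. apply Hnowhere. exists k, V. auto. }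
  destruct (HA O HO (ex_intro _ y0 Oy0)) as [y1 [Oy1 Ay1]].
  destruct (HG O HO (ex_intro _ y1 (conj Ay1 Oy1))) as [y [Ay [Oy HGy]]].
  destruct (Hcover y Ay Oy) as [k Hk].
  destruct (HGy k) as [_ [V Vy]].
  exact (proj2 (proj2_sig V) y Vy Oy Hk).
Qed.

End Topology.

Section Quasicontinuity.

Variables (X : TopSpace) (Z : MetricSpace).

Lemma quasicontinuous_at_dense_within (g : X -> Z) (y : X) (V P : X -> Prop) (e : R) :
  quasicontinuous_at g y -> is_open X V -> V y -> dense_within X V P -> 0 < e ->
  exists z, P z /\ Defs.dist Z (g y) (g z) < e.
Proof.
  intros Hg HV Vy HP He.
  destruct (Hg V _ (ex_intro _ V (conj HV (conj Vy (fun _ h => h))))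
              (m_nbhd_ball Z (g y) e He)) as [O [HO [Hne [HOV HOg]]]].
  destruct (HP O HO Hne HOV) as [z [Oz Pz]].
  exists z. split; auto.
Qed.

Variables (fs : nat -> X -> Z) (f : X -> Z).

Lemma equi_quasicontinuous_quasicontinuous_limit (x : X) :
  (forall y, cluster_point (fun n => fs n y) (f y)) ->
  converges_to (fun n => fs n x) (f x) ->
  equi_quasicontinuous_at fs x -> quasicontinuous_at f x.
Proof.
  intros Hcl Hconv Heq U W HU HW.
  destruct (m_nbhd_contains_ball Z _ _ HW) as [r [Hr HrW]].
  assert (He : 0 < r / 3) by lra.
  destruct (converges_to_ball Z _ _ _ Hconv He) as [N HN].
  destruct (Heq U _ HU He) as [O [n0 [HO [Hne [HOU Hclose]]]]].
  exists O. repeat split; auto.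
  intros y Oy. apply HrW.
  destruct (cluster_point_ball Z _ _ _ (Nat.max N n0) (Hcl y) He) as [n [Hn Hy]].
  pose proof (HN n ltac:(lia)). pose proof (Hclose n y ltac:(lia) Oy).
  pose proof (dist_tri3 Z (f x) (fs n x) (fs n y) (f y)).
  rewrite (Defs.dist_sym Z (fs n y) (f y)) in *. lra.
Qed.

Lemma quasicontinuous_limit_equi_quasicontinuous (A : X -> Prop) (x : X) :
  (forall n, quasicontinuous (fs n)) -> dense A -> baire_subspace A ->
  (forall y, A y -> converges_to (fun n => fs n y) (f y)) -> A x ->
  quasicontinuous_at f x -> equi_quasicontinuous_at fs x.
Proof.
  intros Hqc HA HbA Hconv Ax Hf U eps HU Heps.
  assert (He : 0 < eps / 4) by lra.
  set (e := eps / 4) in *.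
  destruct (Hf U _ HU (m_nbhd_ball Z (f x) e He)) as [O [HO [Hne [HOU HOf]]]].
  destruct (converges_to_ball Z _ _ _ (Hconv x Ax) He) as [N HN].
  set (H := fun k z => forall n, (n >= k)%nat -> Defs.dist Z (f x) (fs n z) < 2 * e).
  destruct (baire_somewhere_dense X A O H HA HbA HO Hne) as [k [V [HV [HneV [HVO HVH]]]]].
  { intros y Ay Oy.
    destruct (converges_to_ball Z _ _ _ (Hconv y Ay) He) as [k Hk].
    exists k. intros n Hn. specialize (Hk n Hn). specialize (HOf y Oy).
    pose proof (Defs.dist_tri Z (f x) (f y) (fs n y)). lra. }
  exists V, (Nat.max k N). repeat split; auto.
  intros n y Hn Vy.
  destruct (quasicontinuous_at_dense_within (fs n) y V (H k) e (Hqc n y) HV Vy HVH He)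
    as [z [Hz Hyz]].
  pose proof (Hz n ltac:(lia)). pose proof (HN n ltac:(lia)).
  pose proof (dist_tri3 Z (fs n x) (f x) (fs n z) (fs n y)).
  rewrite (Defs.dist_sym Z (fs n x) (f x)), (Defs.dist_sym Z (fs n z) (fs n y)) in *.
  unfold e in *. lra.
Qed.

End Quasicontinuity.

Theorem theorem4p5 (X : TopSpace) (Z : MetricSpace)
  (fs : nat -> X -> Z) (f : X -> Z) (A : X -> Prop) :
  baire_space X ->
  (forall n, quasicontinuous (fs n)) ->
  (forall x, cluster_point (fun n => fs n x) (f x)) ->
  dense A -> baire_subspace A ->
  (forall x, A x -> converges_to (fun n => fs n x) (f x)) ->
  forall x, A x -> (equi_quasicontinuous_at fs x <-> quasicontinuous_at f x).
Proof.
  intros _ Hqc Hcl HA HbA Hconv x Ax. split.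
  - apply equi_quasicontinuous_quasicontinuous_limit; auto.
  - apply (quasicontinuous_limit_equi_quasicontinuous X Z fs f A); auto.
Qed.
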